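(* Assume the no-anticipation, common-support and transition-independence conditions stated in the context. Then for every $t=T_0+1,\dots,T$, \[ \boldsymbol\mu^{\mathrm{DiD}}_t-\boldsymbol\mu^{\mathrm{ATT}}_t=\sum_{\mathbf x_1^{T_0}\in\mathcal X^{T_0}}\mathbb{E}\big[\mathbf X_t-\mathbf x_{T_0}\mid \mathbf X_1^{T_0}=\mathbf x_1^{T_0},D=0\big]\Big\{\Pr(\mathbf X_1^{T_0}=\mathbf x_1^{T_0}\mid D=1)-\Pr(\mathbf X_1^{T_0}=\mathbf x_1^{T_0}\mid D=0)\Big\}, \] where $\mathbf x_{T_0}$ denotes the last component of $\mathbf x_1^{T_0}=(\mathbf x_1,\dots,\mathbf x_{T_0})$.
   Context: Fix integers $T_0\ge1$, $T_1\ge1$, $T=T_0+T_1$, $K\ge2$, and outcome categories $\mathcal Y=\{\bar y^{(1)},\dots,\bar y^{(K)}\}$. On a probability space, a unit has a treatment indicator $D\in\{0,1\}$ (treated units are untreated in periods $1,\dots,T_0$ and treated in periods $T_0+1,\dots,T$; control units are never treated) and potential outcomes $Y_t(0),Y_t(1)\in\mathcal Y$, $t=1,\dots,T$. For $d\in\{0,1\}$ let $\mathbf X_t(d)=(\mathbf 1(Y_t(d)=\bar y^{(1)}),\dots,\mathbf 1(Y_t(d)=\bar y^{(K)}))^\top\in\mathcal X:=\{x\in\{0,1\}^K:\sum_k x^{(k)}=1\}$. Observed outcomes: $\mathbf X_t=\mathbf X_t(0)$ for $t\le T_0$, $\mathbf X_t=D\mathbf X_t(1)+(1-D)\mathbf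 X_t(0)$ for $t\ge T_0+1$. Write $\mathbf X_1^{T_0}=(\mathbf X_1,\dots,\mathbf X_{T_0})$, $\mathbf X_1^{T_0}(0)=(\mathbf X_1(0),\dots,\mathbf X_{T_0}(0))$. For $t\ge T_0+1$: $\boldsymbol\mu^{\mathrm{ATT}}_t=\mathbb{E}[\mathbf X_t(1)-\mathbf X_t(0)\mid D=1]$ and $\boldsymbol\mu^{\mathrm{DiD}}_t=\mathbb{E}[\mathbf X_t-\mathbf X_{T_0}\mid D=1]-\mathbb{E}[\mathbf X_t-\mathbf X_{T_0}\mid D=0]$. Conditional quantities are taken only given events of positive probability. No anticipation: $\mathbf X_t(1)=\mathbf X_t(0)$ for $t\le T_0$. Common support: there is $\epsilon>0$ with $\epsilon\le\Pr(D=1\mid\mathbf X_1^{T_0}=\mathbf x_1^{T_0})<1-\epsilon$ for every $\mathbf x_1^{T_0}$ with $\Pr(\mathbf X_1^{T_0}=\mathbf x_1^{T_0})>0$. Transition independence: for every $t\ge T_0+1$, $\mathbf x_t\in\mathcal X$, $\mathbf x_1^{T_0}\in\mathcal X^{T_0}$: $\Pr(\mathbf X_t(0)=\mathbf x_t\mid \mathbf X_1^{T_0}(0)=\mathbf x_1^{T_0},D=1)=\Pr(\mathbf X_t(0)=\mathbf x_t\mid \mathbf X_1^{T_0}(0)=\mathbf x_1^{T_0},D=0)$. *)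

From HB Require Import structures.
From mathcomp Require Import all_boot all_order all_algebra.
From mathcomp Require Import all_classical all_reals all_analysis.
Set Implicit Arguments. Unset Strict Implicit. Unset Printing Implicit Defensive.
Import Order.TTheory GRing.Theory Num.Theory.
Local Open Scope classical_set_scope.
Local Open Scope ring_scope.

Section Defs.
Context {R : realType} {d : measure_display} {Omega : measurableType d}
  (P : probability Omega R).

Definition Pr (A : set Omega) : R := fine (P A).

(* conditional probability Pr(A | B) (only meaningful when Pr B > 0) *)
Definition cPr (A B : set Omega) : R := Pr (A `&` B) / Pr B.

Definition condE (V : finType) (K : nat) (f : V -> 'rV[R]_K)
  (W : Omega -> V) (B : set Omega) : 'rV[R]_K :=
  \sum_(v : V) cPr [set w | W w = v] B *: f v.
End Defs.

(* categories ybar^(1..K) are labelled by 'I_K; X = one-hot indicator vector *)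
Definition onehot (R : realType) (K : nat) (y : 'I_K) : 'rV[R]_K :=
  \row_k (k == y)%:R.

(* observed category at time t (t = 1..T, 1-indexed):
   Y_t(0) for t <= T0, and Y_t(D) for t >= T0+1 *)
Definition Yobs {Omega : Type} (K T0 : nat) (D : Omega -> bool)
  (Y : bool -> nat -> Omega -> 'I_K) (t : nat) (w : Omega) : 'I_K :=
  if (t <= T0)%N then Y false t w else Y (D w) t w.

(* pre-treatment history (x_1, ..., x_{T0}) of a category process Z,
   component i : 'I_T0 corresponds to period i+1 *)
Definition prehist {Omega : Type} (K T0 : nat) (Z : nat -> Omega -> 'I_K)
  (w : Omega) : {ffun 'I_T0 -> 'I_K} :=
  [ffun i : 'I_T0 => Z i.+1 w].

(* the s-th component (1-indexed) of a history x, as an indicator vector *)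
Definition xcomp (R : realType) (K T0 : nat) (x : {ffun 'I_T0 -> 'I_K})
  (s : nat) : 'rV[R]_K :=
  if @insub nat (fun n => (n < T0)%N) 'I_T0 s.-1 is Some i then onehot R (x i)
  else 0.

From HB Require Import structures.
From mathcomp Require Import all_boot all_order all_algebra.
From mathcomp Require Import all_classical all_reals all_analysis.
Import Order.TTheory GRing.Theory Num.Theory.
Local Open Scope classical_set_scope.
Local Open Scope ring_scope.

(* Write m_B for E[X_t(0) - X_{T0}(0) | B].  On the treated the observed X_t is
   X_t(1), which cancels against the ATT, so DiD - ATT = m_{D=1} - m_{D=0}.
   On the event that the pre-treatment history equals x, X_{T0}(0) is the
   constant x_{T0}, and the law of total expectation gives
   m_{D=d} = sum_x Pr(x | D=d) E[X_t(0) - x_{T0} | x, D=d].  Transition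
   independence makes the inner expectation the same for d = 1 and d = 0 as
   soon as the treated cell has positive mass, and common support guarantees
   that the control cell then has positive mass as well; subtracting the two
   sums gives the formula. *)

Definition measurable_rv {d : measure_display} {Omega : measurableType d} {V : Type}
  (W : Omega -> V) : Prop := forall v, measurable [set w | W w = v].

Section MeasurableRV.
Context {d : measure_display} {Omega : measurableType d}.

Lemma measurable_rv_pair {V1 V2 : Type} {W1 : Omega -> V1} {W2 : Omega -> V2} :
  measurable_rv W1 -> measurable_rv W2 -> measurable_rv (fun w => (W1 w, W2 w)).
Proof.
move=> mW1 mW2 [v1 v2].
have -> : [set w | (W1 w, W2 w) = (v1, v2)] =
    [set w | W1 w = v1] `&` [set w | W2 w = v2].
  by apply/seteqP; split=> w /= [-> ->].
exact: measurableI.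
Qed.

Lemma measurable_rv_ffun {I : finType} {V : Type} (F : I -> Omega -> V) :
  (forall i, measurable_rv (F i)) -> measurable_rv (fun w => [ffun i => F i w]).
Proof.
move=> mF x.
have -> : [set w | [ffun i => F i w] = x] =
    \bigcap_(i in [set: I]) [set w | F i w = x i].
  apply/seteqP; split=> w /=; first by move=> <- i _; rewrite ffunE.
  by move=> Fx; apply/ffunP => i; rewrite ffunE; apply: Fx.
by apply: fin_bigcap_measurable => // i _; apply: mF.
Qed.

Lemma measurable_rv_switch {V : Type} (D : Omega -> bool) (F : bool -> Omega -> V) :
  measurable_rv D -> (forall b, measurable_rv (F b)) ->
  measurable_rv (fun w => F (D w) w).
Proof.
move=> mD mF v.
have -> : [set w | F (D w) w = v] =
    ([set w | D w = true] `&` [set w | F true w = v])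
    `|` ([set w | D w = false] `&` [set w | F false w = v]).
  apply/seteqP; split=> w /=; last by case=> -[-> ->].
  by case: (D w) => Fv; [left|right]; split.
by apply: measurableU; apply: measurableI; first [exact: mD | exact: mF].
Qed.

End MeasurableRV.

Section ConditionalExpectation.
Context {R : realType} {d : measure_display} {Omega : measurableType d}
  (P : probability Omega R) {K : nat}.
Implicit Types A B C : set Omega.

Lemma Pr_ge0 A : 0 <= Pr P A.
Proof. exact/fine_ge0/measure_ge0. Qed.

Lemma Pr_le A B : measurable A -> measurable B -> A `<=` B -> Pr P A <= Pr P B.
Proof.
move=> mA mB AB; apply: fine_le; rewrite ?inE ?fin_num_measure //.
by apply: le_measure; rewrite ?inE.
Qed.

Lemma Pr_setDI A B : measurable A -> measurable B ->
  Pr P A = Pr P (A `\` B) + Pr P (A `&` B).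
Proof.
move=> mA mB; rewrite /Pr (measureDI _ mA mB) fineD // fin_num_measure //.
  exact: measurableD.
exact: measurableI.
Qed.

Lemma Pr_partition {V : finType} (W : Omega -> V) A :
  measurable_rv W -> measurable A ->
  Pr P A = \sum_v Pr P ([set w | W w = v] `&` A).
Proof.
move=> mW mA.
have mWA v : measurable ([set w | W w = v] `&` A) by exact: measurableI.
rewrite {1}(_ : A = \bigcup_(v in [set: V]) ([set w | W w = v] `&` A)); last first.
  by apply/seteqP; split=> [w Aw|w [v _ []] //]; exists (W w).
rewrite /Pr measure_fin_bigcup //; first last.
- by move=> u v _ _ [w [[<- _] [<- _]]].
- exact: finite_finset.
rewrite (fsbigE (enum V)) ?enum_uniq //; last by move=> v _; rewrite mem_enum.
rewrite -sum_fine => [|v _]; last exact: fin_num_measure.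
by rewrite big_enum_cond; apply: eq_bigl => v; rewrite in_setT.
Qed.

Lemma cPr_lt1_PrD_gt0 E A : measurable E -> measurable A ->
  (0 < Pr P A -> cPr P E A < 1) -> 0 < Pr P (A `&` E) -> 0 < Pr P (A `\` E).
Proof.
move=> mE mA E_lt1 AE_gt0; have PrA := Pr_setDI _ _ mA mE.
have A_gt0 : 0 < Pr P A by rewrite PrA ltr_wpDl ?Pr_ge0.
by move: (E_lt1 A_gt0); rewrite /cPr ltr_pdivrMr // mul1r setIC PrA ltrDr.
Qed.

Lemma cPr_partition {U : finType} (Z : Omega -> U) A B :
  measurable_rv Z -> measurable A -> measurable B ->
  cPr P A B = \sum_u cPr P (A `&` [set w | Z w = u]) B.
Proof.
move=> mZ mA mB; rewrite /cPr (Pr_partition Z _ mZ (measurableI _ _ mA mB)).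
by rewrite mulr_suml; apply: eq_bigr => u _; rewrite setIA [_ `&` A]setIC.
Qed.

Lemma cPr_eq0 A B : A `&` B = set0 -> cPr P A B = 0.
Proof. by move=> AB0; rewrite /cPr AB0 /Pr measure0 mul0r. Qed.

Lemma mul_cPr A C B : measurable A -> measurable C -> measurable B ->
  cPr P C B * cPr P A (C `&` B) = cPr P (A `&` C) B.
Proof.
move=> mA mC mB; rewrite /cPr -setIA.
have mCB := measurableI _ _ mC mB.
have [CB0|CB_neq0] := eqVneq (Pr P (C `&` B)) 0; last by rewrite mulrC mulrA divfK.
have ACB0 : Pr P (A `&` (C `&` B)) = 0.
  apply/eqP; rewrite eq_le Pr_ge0 andbT -CB0.
  by apply: Pr_le => //; exact: measurableI.
by rewrite CB0 ACB0 !mul0r.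
Qed.

Lemma condEB {V : finType} (f g : V -> 'rV[R]_K) W B :
  condE P (fun v => f v - g v) W B = condE P f W B - condE P g W B.
Proof. by rewrite /condE -sumrB; apply: eq_bigr => v _; rewrite scalerBr. Qed.

Lemma eq_condE {V V' : finType} (f : V -> 'rV[R]_K) (g : V' -> 'rV[R]_K) W W' B :
  measurable_rv W -> measurable_rv W' -> measurable B ->
  (forall w, B w -> f (W w) = g (W' w)) -> condE P f W B = condE P g W' B.
Proof.
(* Refine both sums along the joint values of (W, W'); a joint cell on which
   f and g disagree does not meet B. *)
move=> mW mW' mB fg; rewrite /condE.
under eq_bigr => v _ do rewrite (cPr_partition W' _ _ mW' (mW v) mB) scaler_suml.
under [RHS]eq_bigr => u _ do rewrite (cPr_partition W _ _ mW (mW' u) mB) scaler_suml.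
rewrite exchange_big /=; apply: eq_bigr => u _; apply: eq_bigr => v _.
rewrite setIC; have [->|fg_neq] := eqVneq (f v) (g u); first by [].
rewrite cPr_eq0 ?scale0r //; apply/seteqP; split=> // w [[W'u Wv] Bw].
by move: fg_neq; rewrite -Wv -W'u fg ?eqxx.
Qed.

Lemma condE_pairB {V1 V2 : finType} (f : V1 -> 'rV[R]_K) (g : V2 -> 'rV[R]_K)
    W1 W2 B :
  measurable_rv W1 -> measurable_rv W2 -> measurable B ->
  condE P f W1 B - condE P g W2 B =
  condE P (fun p => f p.1 - g p.2) (fun w => (W1 w, W2 w)) B.
Proof.
move=> mW1 mW2 mB; have mW12 := measurable_rv_pair mW1 mW2.
by rewrite condEB; congr (_ - _); apply: eq_condE.
Qed.

Lemma condE_total {V U : finType} (f : V -> 'rV[R]_K) W (Z : Omega -> U) B :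
  measurable_rv W -> measurable_rv Z -> measurable B ->
  condE P f W B =
  \sum_u cPr P [set w | Z w = u] B *: condE P f W ([set w | Z w = u] `&` B).
Proof.
move=> mW mZ mB; rewrite /condE.
under eq_bigr => v _ do rewrite (cPr_partition Z _ _ mZ (mW v) mB) scaler_suml.
rewrite exchange_big /=; apply: eq_bigr => u _; rewrite scaler_sumr.
by apply: eq_bigr => v _; rewrite scalerA mul_cPr.
Qed.

Lemma cPr_condE_transfer {V : finType} (f : V -> 'rV[R]_K) W C B1 B0 :
  (0 < Pr P (C `&` B1) ->
     forall v, cPr P [set w | W w = v] (C `&` B1) = cPr P [set w | W w = v] (C `&` B0)) ->
  cPr P C B1 *: condE P f W (C `&` B1) = cPr P C B1 *: condE P f W (C `&` B0).
Proof.
move=> eqW; have [CB0|CB_neq0] := eqVneq (Pr P (C `&` B1)) 0.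
  by rewrite /cPr CB0 mul0r !scale0r.
have CB_gt0 : 0 < Pr P (C `&` B1) by rewrite lt_def CB_neq0 Pr_ge0.
by congr (_ *: _); apply: eq_bigr => v _; rewrite eqW.
Qed.

End ConditionalExpectation.

Section ObservedOutcomes.
Context {Omega : Type} {K T0 : nat} (D : Omega -> bool)
  (Y : bool -> nat -> Omega -> 'I_K).

Lemma prehist_Yobs : prehist T0 (Yobs T0 D Y) = prehist T0 (Y false).
Proof. by apply: funext => w; apply/ffunP => i; rewrite !ffunE /Yobs ltn_ord. Qed.

Lemma Yobs_pre s : (s <= T0)%N -> Yobs T0 D Y s = Y false s.
Proof. by move=> s_le; apply: funext => w; rewrite /Yobs s_le. Qed.

Lemma Yobs_post s : (T0 < s)%N -> Yobs T0 D Y s = fun w => Y (D w) s w.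
Proof. by move=> s_gt; apply: funext => w; rewrite /Yobs leqNgt s_gt. Qed.

Lemma xcomp_prehist (R : realType) (Z : nat -> Omega -> 'I_K) w s :
  (0 < s <= T0)%N -> xcomp R (prehist T0 Z w) s = onehot R (Z s w).
Proof.
case/andP=> s_gt0 s_le; rewrite /xcomp.
case: insubP => [i _ i_val|]; first by rewrite ffunE i_val prednK.
by rewrite (leq_trans _ s_le) // ltn_predL.
Qed.

End ObservedOutcomes.

Section DiDDecomposition.
Context {R : realType} {d : measure_display} {Omega : measurableType d}
  (P : probability Omega R) {K T0 : nat} (D : Omega -> bool)
  (Y : bool -> nat -> Omega -> 'I_K) (t : nat).
Hypotheses (T0_gt0 : (0 < T0)%N) (mD : measurable_rv D)
  (mYt : forall b, measurable_rv (Y b t))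
  (mYpre : forall s, (0 < s <= T0)%N -> measurable_rv (Y false s)).

Local Notation hist := (prehist T0 (Y false)).
Local Notation cell x := [set w | hist w = x].
Local Notation treated := [set w | D w].
Local Notation control := [set w | ~~ D w].
Local Notation jump := (fun p : 'I_K * 'I_K => onehot R p.1 - onehot R p.2).

Lemma measurable_control : measurable control.
Proof.
rewrite (_ : control = [set w | D w = false]); first exact: mD.
by apply/seteqP; split=> w /=; case: (D w).
Qed.

Lemma measurable_hist : measurable_rv hist.
Proof.
apply: measurable_rv_ffun => i; apply: mYpre.
by rewrite /= (leq_trans (ltn_ord i)).
Qed.

Lemma DiD_sub_ATT_trend :
  condE P jump (fun w => (Y (D w) t w, Y false T0 w)) treated
  - condE P jump (fun w => (Y (D w) t w, Y false T0 w)) control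
  - condE P jump (fun w => (Y true t w, Y false t w)) treated
  = condE P jump (fun w => (Y false t w, Y false T0 w)) treated
    - condE P jump (fun w => (Y false t w, Y false T0 w)) control.
Proof.
have mYT0 : measurable_rv (Y false T0) by apply: mYpre; rewrite T0_gt0 leqnn.
have mYobs := measurable_rv_switch D (fun b => Y b t) mD mYt.
have mObs := measurable_rv_pair mYobs mYT0.
have mATT := measurable_rv_pair (mYt true) (mYt false).
have mUnt := measurable_rv_pair (mYt false) mYT0.
have mT : measurable treated := mD true.
rewrite addrAC condE_pairB //; congr (_ - _).
  apply: eq_condE => //; first exact: measurable_rv_pair.
  by move=> w Dw; rewrite Dw /= opprB addrC addrA subrK.
apply: eq_condE => //; first exact: measurable_control.
by move=> w /negbTE ->.
Qed.

Lemma condE_trend_cells B : measurable B ->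
  condE P jump (fun w => (Y false t w, Y false T0 w)) B =
  \sum_x cPr P (cell x) B *:
    condE P (fun y => onehot R y - xcomp R x T0) (Y false t) (cell x `&` B).
Proof.
have T0_range : (0 < T0 <= T0)%N by rewrite T0_gt0 leqnn.
have mUnt := measurable_rv_pair (mYt false) (mYpre _ T0_range).
move=> mB; rewrite (condE_total P _ _ hist) //; last exact: measurable_hist.
apply: eq_bigr => x _; congr (_ *: _).
apply: eq_condE => //; first by apply: measurableI => //; exact: measurable_hist.
by move=> w [/= <- _]; rewrite xcomp_prehist.
Qed.

Lemma cell_control_gt0 x :
  (0 < Pr P (cell x) -> cPr P treated (cell x) < 1) ->
  0 < Pr P (cell x `&` treated) -> 0 < Pr P (cell x `&` control).
Proof.
move=> treated_lt1.
move/(cPr_lt1_PrD_gt0 P _ _ (mD true) (measurable_hist x) treated_lt1).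
by congr (0 < Pr P _); apply/seteqP; split=> w /= [Ax /negP nD].
Qed.

End DiDDecomposition.

Theorem proposition3 (R : realType) (d : measure_display)
  (Omega : measurableType d) (P : probability Omega R)
  (T0 T1 K : nat) (hT0 : (1 <= T0)%N) (hT1 : (1 <= T1)%N) (hK : (2 <= K)%N)
  (D : Omega -> bool) (Y : bool -> nat -> Omega -> 'I_K)
  (* D and the potential outcomes are random variables *)
  (mD : forall b : bool, measurable [set w | D w = b])
  (mY : forall (b : bool) (t : nat) (k : 'I_K), (1 <= t <= T0 + T1)%N ->
          measurable [set w | Y b t w = k])
  (* no anticipation *)
  (noanticip : forall (t : nat) (w : Omega), (1 <= t <= T0)%N ->
          Y true t w = Y false t w)
  (* common support *)
  (commonsupp : exists eps : R, 0 < eps /\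
     forall x : {ffun 'I_T0 -> 'I_K},
       0 < Pr P [set w | prehist T0 (Yobs T0 D Y) w = x] ->
       eps <= cPr P [set w | D w] [set w | prehist T0 (Yobs T0 D Y) w = x]
       /\ cPr P [set w | D w] [set w | prehist T0 (Yobs T0 D Y) w = x] < 1 - eps)
  (* transition independence *)
  (transind : forall (t : nat) (y : 'I_K) (x : {ffun 'I_T0 -> 'I_K}),
     (T0 + 1 <= t <= T0 + T1)%N ->
     0 < Pr P ([set w | prehist T0 (Y false) w = x] `&` [set w | D w]) ->
     0 < Pr P ([set w | prehist T0 (Y false) w = x] `&` [set w | ~~ D w]) ->
     cPr P [set w | Y false t w = y]
         ([set w | prehist T0 (Y false) w = x] `&` [set w | D w])
     = cPr P [set w | Y false t w = y]
         ([set w | prehist T0 (Y false) w = x] `&` [set w | ~~ D w])) :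
  forall t : nat, (T0 + 1 <= t <= T0 + T1)%N ->
    let muDiD :=
      condE P (fun p : 'I_K * 'I_K => onehot R p.1 - onehot R p.2)
        (fun w => (Yobs T0 D Y t w, Yobs T0 D Y T0 w)) [set w | D w]
      - condE P (fun p : 'I_K * 'I_K => onehot R p.1 - onehot R p.2)
        (fun w => (Yobs T0 D Y t w, Yobs T0 D Y T0 w)) [set w | ~~ D w] in
    let muATT :=
      condE P (fun p : 'I_K * 'I_K => onehot R p.1 - onehot R p.2)
        (fun w => (Y true t w, Y false t w)) [set w | D w] in
    muDiD - muATT =
    \sum_(x : {ffun 'I_T0 -> 'I_K})
      (cPr P [set w | prehist T0 (Yobs T0 D Y) w = x] [set w | D w]
       - cPr P [set w | prehist T0 (Yobs T0 D Y) w = x] [set w | ~~ D w])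
      *: condE P (fun y : 'I_K => onehot R y - xcomp R x T0) (Yobs T0 D Y t)
           ([set w | prehist T0 (Yobs T0 D Y) w = x] `&` [set w | ~~ D w]).
Proof.
move=> t /andP[t_lo t_hi] muDiD muATT; rewrite /muDiD /muATT {muDiD muATT}.
have T0_lt_t : (T0 < t)%N by rewrite -addn1.
have mYt b : measurable_rv (Y b t).
  by move=> k; apply: mY; rewrite t_hi andbT (leq_trans _ t_lo) ?leq_addl.
have mYpre s : (0 < s <= T0)%N -> measurable_rv (Y false s).
  by case/andP=> s_gt0 s_le k; apply: mY; rewrite s_gt0 (leq_trans s_le) ?leq_addr.
have [eps [eps_gt0 supp]] := commonsupp.
rewrite prehist_Yobs in supp; rewrite prehist_Yobs (Yobs_post _ _ _ T0_lt_t) Yobs_pre //.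
have mT : measurable [set w | D w] := mD true.
have mC := measurable_control D mD.
rewrite DiD_sub_ATT_trend // !condE_trend_cells //.
rewrite -sumrB; apply: eq_bigr => x _.
rewrite (cPr_condE_transfer _ _ _ _ _ [set w | ~~ D w]) => [|xD_gt0 y]; last first.
  apply: transind; rewrite ?t_lo ?t_hi // cell_control_gt0 // => x_gt0.
  have [_ lt_1eps] := supp x x_gt0.
  by apply: (lt_le_trans lt_1eps); rewrite gerBl ltW.
rewrite -scalerBl; congr (_ *: _); apply: eq_condE => //.
- exact: (measurable_rv_switch D (fun b => Y b t)).
- by apply: measurableI => //; exact: measurable_hist.
- by move=> w [_ /negbTE ->].
Qed.
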